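(* Let $\{z_n\}_{n\ge 0}$ be a sequence of positive real numbers satisfying $a_nz_{n+1}=b_nz_n+c_nz_{n-1}$ for all $n\ge 1$, where $a_n,b_n,c_n>0$, and let $\lambda_n=\frac{b_n+\sqrt{b_n^2+4a_nc_n}}{2a_n}$ for $n\ge 1$. Suppose there exists a sequence $\{\mu_n\}_{n\ge 1}$ of positive reals such that: (i) $\mu_n\le \lambda_n$ for all $n\ge 1$; (ii) $z_1\le \mu_1z_0$ and $z_2\le \mu_2z_1$; (iii) $a_n\mu_{n-1}\mu_{n+1}\ge b_n\mu_{n-1}+c_n$ for all $n\ge 2$. Then $\{z_n\}_{n\ge 0}$ is log-convex.
   Context: A sequence $a_0,a_1,\ldots$ of nonnegative real numbers is log-convex if $a_{k-1}a_{k+1}\ge a_k^2$ for all $k\ge 1$. *)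

From Stdlib Require Import Reals.
Open Scope R_scope.

Definition log_convex (a : nat -> R) : Prop :=
  (forall n, 0 <= a n) /\
  (forall k : nat, (1 <= k)%nat -> a (k - 1)%nat * a (k + 1)%nat >= (a k) ^ 2).

Definition lam (a b c : nat -> R) (n : nat) : R :=
  (b n + sqrt ((b n) ^ 2 + 4 * a n * c n)) / (2 * a n).

From Stdlib Require Import Reals Lra Lia Psatz.
Open Scope R_scope.

(* λ_n is the positive root of a_n x^2 = b_n x + c_n.  If z_n <= λ_n z_{n-1}, the recurrence
   forces z_{n+1} >= λ_n z_n, and these two ratio bounds together give
   z_{n-1} z_{n+1} >= z_n^2.  It therefore suffices to show z_n <= μ_n z_{n-1} for all n >= 1,
   which propagates from n-1 to n+1 by (iii): z_n >= λ_{n-1} z_{n-1} >= μ_{n-1} z_{n-1}, hence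
   a_n z_{n+1} <= (b_n + c_n / μ_{n-1}) z_n <= a_n μ_{n+1} z_n. *)

Lemma lam_root (a b c : nat -> R) (n : nat) :
  0 < a n -> 0 <= c n ->
  a n * lam a b c n ^ 2 = b n * lam a b c n + c n.
Proof.
  intros Ha Hc; unfold lam.
  assert (Hs : sqrt (b n ^ 2 + 4 * a n * c n) ^ 2 = b n ^ 2 + 4 * a n * c n)
    by (apply pow2_sqrt; nra).
  set (s := sqrt (b n ^ 2 + 4 * a n * c n)) in *.
  replace (c n) with ((s ^ 2 - b n ^ 2) / (4 * a n)) by (rewrite Hs; field; lra).
  field; lra.
Qed.

Lemma lam_ge (a b c : nat -> R) (n : nat) :
  0 < a n -> 0 <= c n -> b n <= a n * lam a b c n.
Proof.
  intros Ha Hc; unfold lam.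
  assert (Hb : b n <= sqrt (b n ^ 2 + 4 * a n * c n)).
  { assert (Hs : sqrt (b n ^ 2 + 4 * a n * c n) ^ 2 = b n ^ 2 + 4 * a n * c n)
      by (apply pow2_sqrt; nra).
    pose proof (sqrt_pos (b n ^ 2 + 4 * a n * c n)); nra. }
  replace (a n * ((b n + sqrt (b n ^ 2 + 4 * a n * c n)) / (2 * a n)))
    with ((b n + sqrt (b n ^ 2 + 4 * a n * c n)) / 2) by (field; lra).
  lra.
Qed.

(* Since a l - b >= 0 and (a l - b) l = c, the bound y <= l x gives (a l - b) y <= c x. *)
Lemma recurrence_ratio_ge (a b c l x y w : R) :
  0 < a -> a * l ^ 2 = b * l + c -> b <= a * l ->
  y <= l * x -> a * w = b * y + c * x -> l * y <= w.
Proof.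
  intros Ha Hroot Hbl Hyx Hrec.
  assert (Hexcess : 0 <= (a * l - b) * (l * x - y)) by nra.
  apply Rmult_le_reg_l with a; nra.
Qed.

Lemma recurrence_ratio_le (a b c m m' x y w : R) :
  0 < a -> 0 < m -> 0 <= c -> 0 <= y ->
  a * m * m' >= b * m + c -> m * x <= y -> a * w = b * y + c * x -> w <= m' * y.
Proof.
  intros Ha Hm Hc Hy Hmm' Hxy Hrec.
  apply Rmult_le_reg_l with (a * m); [nra|].
  assert (Hcx : c * (m * x) <= c * y) by nra.
  nra.
Qed.

Lemma sq_le_of_ratio_bounds (l x y w : R) :
  0 <= x -> 0 <= y -> y <= l * x -> l * y <= w -> y ^ 2 <= x * w.
Proof. intros Hx Hy Hyx Hwy; nra. Qed.

Section RatioBounds.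

Variables z a b c mu : nat -> R.

Hypothesis z_pos : forall n, 0 < z n.
Hypothesis abc_pos : forall n, (1 <= n)%nat -> 0 < a n /\ 0 < b n /\ 0 < c n.
Hypothesis z_rec :
  forall n, (1 <= n)%nat -> a n * z (n + 1)%nat = b n * z n + c n * z (n - 1)%nat.
Hypothesis mu_pos : forall n, (1 <= n)%nat -> 0 < mu n.
Hypothesis mu_le_lam : forall n, (1 <= n)%nat -> mu n <= lam a b c n.
Hypothesis ratio1 : z 1%nat <= mu 1%nat * z 0%nat.
Hypothesis ratio2 : z 2%nat <= mu 2%nat * z 1%nat.
Hypothesis mu_rec : forall n, (2 <= n)%nat ->
  a n * mu (n - 1)%nat * mu (n + 1)%nat >= b n * mu (n - 1)%nat + c n.

Lemma z_recS (m : nat) :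
  a (S m) * z (S (S m)) = b (S m) * z (S m) + c (S m) * z m.
Proof.
  replace (S (S m)) with (S m + 1)%nat by lia.
  rewrite z_rec by lia; do 2 f_equal; f_equal; lia.
Qed.

Lemma ratio_lower_of_upper (m : nat) :
  z (S m) <= lam a b c (S m) * z m -> lam a b c (S m) * z (S m) <= z (S (S m)).
Proof.
  destruct (abc_pos (S m)) as (Ha & _ & Hc); [lia|].
  intro Hratio.
  apply recurrence_ratio_ge with (a (S m)) (b (S m)) (c (S m)) (z m);
    auto using lam_root, lam_ge, z_recS, Rlt_le.
Qed.

Lemma ratio_upper_step (m : nat) :
  z (S m) <= mu (S m) * z m -> z (S (S (S m))) <= mu (S (S (S m))) * z (S (S m)).
Proof.
  intro Hratio.
  destruct (abc_pos (S (S m))) as (Ha & _ & Hc); [lia|].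
  assert (Hlam : lam a b c (S m) * z (S m) <= z (S (S m))).
  { apply ratio_lower_of_upper.
    pose proof (mu_le_lam (S m) ltac:(lia)); pose proof (z_pos m); nra. }
  assert (Hmu : mu (S m) * z (S m) <= z (S (S m))).
  { pose proof (mu_le_lam (S m) ltac:(lia)); pose proof (z_pos (S m)); nra. }
  pose proof (mu_rec (S (S m)) ltac:(lia)) as Hmurec.
  replace (S (S m) - 1)%nat with (S m) in Hmurec by lia.
  replace (S (S m) + 1)%nat with (S (S (S m))) in Hmurec by lia.
  apply recurrence_ratio_le with (a (S (S m))) (b (S (S m))) (c (S (S m))) (mu (S m)) (z (S m));
    auto using z_recS, Rlt_le.
  apply mu_pos; lia.
Qed.

Lemma ratio_upper (m : nat) : z (S m) <= mu (S m) * z m.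
Proof.
  assert (Hpair : forall k, z (S k) <= mu (S k) * z k /\
                            z (S (S k)) <= mu (S (S k)) * z (S k)).
  { induction k as [|k [IH1 IH2]]; [auto|].
    split; [exact IH2 | exact (ratio_upper_step k IH1)]. }
  apply Hpair.
Qed.

Lemma log_convex_at (m : nat) : z (S m) ^ 2 <= z m * z (S (S m)).
Proof.
  assert (Hupper : z (S m) <= lam a b c (S m) * z m).
  { pose proof (ratio_upper m); pose proof (mu_le_lam (S m) ltac:(lia));
      pose proof (z_pos m); nra. }
  apply sq_le_of_ratio_bounds with (lam a b c (S m)); auto using Rlt_le.
  exact (ratio_lower_of_upper m Hupper).
Qed.

End RatioBounds.

Theorem theorem3p4 (z a b c mu : nat -> R) :
  (forall n, 0 < z n) ->
  (forall n, (1 <= n)%nat -> 0 < a n /\ 0 < b n /\ 0 < c n) ->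
  (forall n, (1 <= n)%nat -> a n * z (n + 1)%nat = b n * z n + c n * z (n - 1)%nat) ->
  (forall n, (1 <= n)%nat -> 0 < mu n) ->
  (forall n, (1 <= n)%nat -> mu n <= lam a b c n) ->
  z 1%nat <= mu 1%nat * z 0%nat ->
  z 2%nat <= mu 2%nat * z 1%nat ->
  (forall n, (2 <= n)%nat ->
     a n * mu (n - 1)%nat * mu (n + 1)%nat >= b n * mu (n - 1)%nat + c n) ->
  log_convex z.
Proof.
  intros Hz Habc Hrec Hmu Hml H1 H2 H3.
  split; [intro n; apply Rlt_le, Hz|].
  intros [|m] Hk; [lia|].
  replace (S m - 1)%nat with m by lia.
  replace (S m + 1)%nat with (S (S m)) by lia.
  apply Rle_ge, (log_convex_at z a b c mu); assumption.
Qed.
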